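(* Let $V$ be a finite dimensional vector space over a field $\mathbb{K}$ of characteristic zero, and let $z$ be an element of $V\setminus\{0\}$ or of $\wedge^2V\setminus\{0\}$. Then $$\{u\in\widehat T\otimes\widehat T:\ [\Delta z,u]=0\}=\mathbb{K}[[z]]\otimes\mathbb{K}[[z]].$$
   Context: $\widehat T=\widehat T(V)=\prod_{m\ge0}V^{\otimes m}$ is the completed tensor algebra, with coproduct $\Delta$ for which elements of $V$ are primitive, so $\Delta z=z\otimes1+1\otimes z$; $\wedge^2V$ is viewed inside $V^{\otimes2}$ as antisymmetric tensors. Tensor products of completed algebras are the completed tensor products, and $\mathbb{K}[[z]]\subset\widehat T$ is the set of series $\sum_k c_kz^k$, $c_k\in\mathbb{K}$. *)

From mathcomp Require Import all_boot all_order all_algebra.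
Set Implicit Arguments. Unset Strict Implicit. Unset Printing Implicit Defensive.
Import GRing.Theory.
Local Open Scope ring_scope.

(* V = K^d with fixed basis e_0..e_(d-1).  V^{(x)m} has basis the words of
   length m over 'I_d, so the completed tensor algebra
   T^ = prod_m V^{(x)m} is identified with functions  word d -> K
   (coefficient of each basis tensor), and the completed tensor product
   T^ (x)^ T^ = prod_(m,n) V^{(x)m} (x) V^{(x)n} with functions
   word d -> word d -> K. *)

Definition word (d : nat) := seq 'I_d.
Definition tser (K : fieldType) (d : nat) := word d -> K.
Definition tser2 (K : fieldType) (d : nat) := word d -> word d -> K.

Definition tone (K : fieldType) (d : nat) : tser K d := fun w => (size w == 0)%N%:R.

Definition tmul (K : fieldType) d (f g : tser K d) : tser K d :=
  fun w => \sum_(i < (size w).+1) f (take i w) * g (drop i w).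

Definition texp (K : fieldType) d (f : tser K d) (k : nat) : tser K d :=
  iter k (tmul f) (@tone K d).

Definition tmul2 (K : fieldType) d (f g : tser2 K d) : tser2 K d :=
  fun w1 w2 => \sum_(i < (size w1).+1) \sum_(j < (size w2).+1)
     f (take i w1) (take j w2) * g (drop i w1) (drop j w2).

Definition tcomm2 (K : fieldType) d (f g : tser2 K d) : tser2 K d :=
  fun w1 w2 => tmul2 f g w1 w2 - tmul2 g f w1 w2.

Definition Delta_prim (K : fieldType) d (z : tser K d) : tser2 K d :=
  fun w1 w2 => z w1 * @tone K d w2 + @tone K d w1 * z w2.

Definition in_V_nonzero (K : fieldType) d (z : tser K d) : Prop :=
  (forall w, size w != 1%N -> z w = 0) /\ (exists w, z w != 0).

(* z is a nonzero element of /\^2 V, viewed inside V^{(x)2} as antisymmetric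
   tensors *)
Definition in_wedge2_nonzero (K : fieldType) d (z : tser K d) : Prop :=
  (forall w, size w != 2%N -> z w = 0) /\
  (forall i j : 'I_d, z [:: i; j] = - z [:: j; i]) /\
  (exists w, z w != 0).

(* u lies in K[[z]] (x)^ K[[z]] : u = sum_(k,l) c_(k,l) z^k (x) z^l.
   Since z has positive degree, only k <= |w1|, l <= |w2| contribute
   to the coefficient at (w1,w2). *)
Definition in_powser_tensor (K : fieldType) d (z : tser K d) (u : tser2 K d)
  : Prop :=
  exists c : nat -> nat -> K, forall w1 w2 : word d,
    u w1 w2 = \sum_(k < (size w1).+1) \sum_(l < (size w2).+1)
                 c k l * texp z k w1 * texp z l w2.

From mathcomp Require Import all_boot all_order all_algebra.
From mathcomp Require Import zify.
Set Implicit Arguments. Unset Strict Implicit. Unset Printing Implicit Defensive.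
Import GRing.Theory.
Local Open Scope ring_scope.

(* Both cases concern a nonzero z homogeneous of degree e > 0 (e = 1, 2).
   The centralizer of z is K[[z]], degree by degree: if the degree-m part f
   of an element commutes with z, fix a word w0 with z(w0) <> 0 and put
   g(v) = f(w0 v) / z(w0); comparing the coefficients of w0 x and x w0 in
   z f = f z gives f = g z = z g, so by induction on m, f is a multiple of
   z^(m/e).  The base cases 0 < m < e only arise for e = 2, where
   antisymmetry of z and 2 <> 0 rule them out.
   If u commutes with Delta z, subtract the element sum c_kl z^k (x) z^l
   that agrees with u at all pairs (w0^k, w0^l); the difference vanishes by
   induction on the length of its second argument y, because each of its
   slices u(., y) and u(w0^k, .) commutes with z and vanishes at the
   relevant power of w0. *)

Lemma sum_ord_single (V : nmodType) n (F : nat -> V) i0 : (i0 <= n)%N ->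
  (forall i, (i <= n)%N -> i != i0 -> F i = 0) -> \sum_(i < n.+1) F i = F i0.
Proof.
move=> le_i0n F0; rewrite (bigD1 (inord i0)) //= big1 ?addr0 ?inordK //.
move=> i ne_i; apply: F0; first by rewrite -ltnS.
by apply: contra ne_i => /eqP eq_i; apply/eqP/val_inj; rewrite /= inordK // eq_i.
Qed.

Section TensorProducts.
Variables (K : fieldType) (d : nat).
Implicit Types (f : tser K d) (u : tser2 K d) (w : word d).

Lemma sum_tone_take w (F : 'I_(size w).+1 -> K) :
  \sum_(j < (size w).+1) tone K (take j w) * F j = F ord0.
Proof.
rewrite big_ord_recl take0 /tone /= mul1r big1 ?addr0 // => j _.
by rewrite size_take_min /bump add1n (minn_idPl (ltn_ord j)) mul0r.
Qed.

Lemma sum_tone_drop w (F : 'I_(size w).+1 -> K) :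
  \sum_(j < (size w).+1) F j * tone K (drop j w) = F ord_max.
Proof.
rewrite big_ord_recr /= drop_size /tone /= mulr1 big1 ?add0r // => j _.
by rewrite size_drop subn_eq0 leqNgt ltn_ord mulr0.
Qed.

Lemma tmul1r f : tmul (@tone K d) f =1 f.
Proof. by move=> w; rewrite /tmul sum_tone_take drop0. Qed.

Lemma tmulr1 f : tmul f (@tone K d) =1 f.
Proof. by move=> w; rewrite /tmul sum_tone_drop take_size. Qed.

Lemma tmul2_Delta_l f u w1 w2 :
  tmul2 (Delta_prim f) u w1 w2 = tmul f (u^~ w2) w1 + tmul f (u w1) w2.
Proof.
rewrite /tmul2 /Delta_prim.
under eq_bigr => i _ do under eq_bigr => j _ do rewrite mulrDl -!mulrA.
under eq_bigr => i _ do rewrite big_split /= -!mulr_sumr sum_tone_take drop0.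
by rewrite big_split /= sum_tone_take drop0.
Qed.

Lemma tmul2_Delta_r f u w1 w2 :
  tmul2 u (Delta_prim f) w1 w2 = tmul (u^~ w2) f w1 + tmul (u w1) f w2.
Proof.
rewrite /tmul2 /Delta_prim.
under eq_bigr => i _ do under eq_bigr => j _ do
  rewrite mulrDr mulrA [X in _ + X]mulrCA [X in _ + X]mulrC.
under eq_bigr => i _ do rewrite big_split /= -!mulr_suml sum_tone_drop take_size.
by rewrite big_split /= sum_tone_drop take_size.
Qed.

End TensorProducts.

Section HomogeneousElement.
Variables (K : fieldType) (d : nat) (z : tser K d) (e : nat).
Hypotheses (e_gt0 : (0 < e)%N) (z_homog : forall w : word d, size w != e -> z w = 0).
Implicit Types (f g : tser K d) (u : tser2 K d) (x y : word d).

Definition lzmul f : tser K d := fun x => z (take e x) * f (drop e x).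
Definition rzmul f : tser K d :=
  fun x => f (take (size x - e) x) * z (drop (size x - e) x).

Lemma tmul_homog_l f x : tmul z f x = lzmul f x.
Proof.
rewrite /tmul /lzmul; have [le_ex | lt_xe] := leqP e (size x).
  rewrite (@sum_ord_single _ _ (fun i => z (take i x) * f (drop i x)) e) //.
  by move=> i le_ix ne_ie; rewrite z_homog ?mul0r // size_takel.
rewrite take_oversize ?(ltnW lt_xe) // z_homog ?ltn_eqF // mul0r.
by rewrite big1 // => i _; rewrite z_homog ?mul0r // size_take_min; apply/eqP; lia.
Qed.

Lemma tmul_homog_r f x : tmul f z x = rzmul f x.
Proof.
rewrite /tmul /rzmul; have [le_ex | lt_xe] := leqP e (size x).
  rewrite (@sum_ord_single _ _ (fun i => f (take i x) * z (drop i x)) (size x - e))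
    ?leq_subr //.
  by move=> i le_ix ne_i; rewrite (@z_homog (drop i x)) ?mulr0 // size_drop; lia.
have -> : (size x - e = 0)%N by lia.
rewrite drop0 (@z_homog x) ?ltn_eqF // mulr0.
by rewrite big1 // => i _; rewrite (@z_homog (drop i x)) ?mulr0 // size_drop; lia.
Qed.

Lemma eq_lzmul f g x : (forall v, size v = (size x - e)%N -> f v = g v) ->
  lzmul f x = lzmul g x.
Proof. by move=> fg; rewrite /lzmul fg // size_drop. Qed.

Lemma eq_rzmul f g x : (forall v, size v = (size x - e)%N -> f v = g v) ->
  rzmul f x = rzmul g x.
Proof. by move=> fg; rewrite /rzmul fg // size_takel // leq_subr. Qed.

Lemma lzmul_eq0 f x : (forall v, (size v < size x)%N -> f v = 0) -> lzmul f x = 0.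
Proof.
move=> f0; rewrite /lzmul; have [le_ex | lt_xe] := leqP e (size x).
  by rewrite f0 ?mulr0 // size_drop; lia.
by rewrite take_oversize ?(ltnW lt_xe) // z_homog ?ltn_eqF // mul0r.
Qed.

Lemma rzmul_eq0 f x : (forall v, (size v < size x)%N -> f v = 0) -> rzmul f x = 0.
Proof.
move=> f0; rewrite /rzmul; have [le_ex | lt_xe] := leqP e (size x).
  by rewrite f0 ?mul0r // size_takel ?leq_subr //; lia.
have -> : (size x - e = 0)%N by lia.
by rewrite drop0 (@z_homog x) ?ltn_eqF // mulr0.
Qed.

Lemma lzmul_divr f c x : lzmul (fun v => f v / c) x = lzmul f x / c.
Proof. by rewrite /lzmul mulrA. Qed.

Lemma rzmul_divr f c x : rzmul (fun v => f v / c) x = rzmul f x / c.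
Proof. by rewrite /rzmul mulrAC. Qed.

Lemma lzmul_rzmul f x : lzmul (rzmul f) x = rzmul (lzmul f) x.
Proof.
rewrite /lzmul /rzmul size_drop.
have [lt_x2e | le_2ex] := ltnP (size x) (e + e).
  rewrite [z (take e (take _ x))]z_homog; last first.
    by rewrite !size_take_min; apply/eqP; lia.
  have [lt_xe | le_ex] := ltnP (size x) e.
    by rewrite (@z_homog (take e x)) ?mul0r // size_take_min; apply/eqP; lia.
  have -> : (size x - e - e = 0)%N by lia.
  by rewrite drop0 (@z_homog (drop e x)) ?mulr0 ?mul0r // size_drop; apply/eqP; lia.
rewrite take_takel; last lia.
have sub_e : (size x - e - e + e = size x - e)%N by lia.
by rewrite take_drop sub_e drop_drop sub_e mulrA.
Qed.

Lemma texpS k x : texp z k.+1 x = lzmul (texp z k) x.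
Proof. exact: tmul_homog_l. Qed.

Lemma texpSr k x : texp z k.+1 x = rzmul (texp z k) x.
Proof.
elim: k x => [|k IHk] x.
  by rewrite -tmul_homog_r tmul1r /texp /= tmulr1.
rewrite texpS (eq_lzmul (g := rzmul (texp z k))) => [|v _]; last exact: IHk.
by rewrite lzmul_rzmul; apply: eq_rzmul => v _; rewrite texpS.
Qed.

Lemma texp_homog k x : size x != (e * k)%N -> texp z k x = 0.
Proof.
elim: k x => [|k IHk] x x_ne.
  by move: x_ne; rewrite muln0 /texp /= /tone => /negbTE ->.
rewrite mulnS in x_ne; rewrite texpS /lzmul; have [le_ex | lt_xe] := leqP e (size x).
  by rewrite IHk ?mulr0 // size_drop; lia.
by rewrite z_homog ?mul0r // size_take_min; apply/eqP; lia.
Qed.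

(* The series sum_k c_k z^k: at a word x only k = |x| / e contributes. *)
Definition zser (c : nat -> K) : tser K d :=
  fun x => c (size x %/ e)%N * texp z (size x %/ e) x.

Definition zser2 (c : nat -> nat -> K) : tser2 K d :=
  fun x y => zser (fun k => zser (c k) y) x.

Lemma sum_texp (F : nat -> K) x n : (size x < n)%N ->
  \sum_(k < n) F k * texp z k x = zser F x.
Proof.
case: n => [|n] // lt_xn.
rewrite (@sum_ord_single _ _ (fun k => F k * texp z k x) (size x %/ e)) //.
  exact: leq_trans (leq_div _ _) _.
move=> k _ ne_k; rewrite texp_homog ?mulr0 //.
by apply: contra ne_k => /eqP ->; rewrite mulKn.
Qed.

Lemma zser2_powser (c : nat -> nat -> K) x y :
  \sum_(k < (size x).+1) \sum_(l < (size y).+1) c k l * texp z k x * texp z l y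
  = zser2 c x y.
Proof.
rewrite -[RHS](@sum_texp _ x (size x).+1) //; apply: eq_bigr => k _.
under eq_bigr => l _ do rewrite mulrAC.
by rewrite -mulr_suml sum_texp.
Qed.

Lemma in_powser_tensorP u :
  in_powser_tensor z u <-> exists c, forall x y, u x y = zser2 c x y.
Proof.
by split=> -[c uc]; exists c => x y; rewrite uc zser2_powser.
Qed.

Lemma zser2_swap c x y :
  zser2 c x y = zser (fun l => c (size x %/ e)%N l * texp z (size x %/ e) x) y.
Proof. by rewrite /zser2 /zser mulrAC. Qed.

Lemma lzmul_zser c x : lzmul (zser c) x = rzmul (zser c) x.
Proof.
set k := ((size x - e) %/ e)%N.
have zserE v : size v = (size x - e)%N -> zser c v = c k * texp z k v.
  by rewrite /zser => ->.
rewrite (eq_lzmul zserE) (eq_rzmul zserE).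
transitivity (c k * texp z k.+1 x).
  by rewrite texpS /lzmul mulrCA.
by rewrite texpSr /rzmul mulrA.
Qed.

Definition commutes_Delta u := forall x y,
  lzmul (u^~ y) x + lzmul (u x) y = rzmul (u^~ y) x + rzmul (u x) y.

Lemma commutes_DeltaP u :
  (forall x y, tcomm2 (Delta_prim z) u x y = 0) <-> commutes_Delta u.
Proof.
have tcommE x y : tcomm2 (Delta_prim z) u x y =
    (lzmul (u^~ y) x + lzmul (u x) y) - (rzmul (u^~ y) x + rzmul (u x) y).
  by rewrite /tcomm2 tmul2_Delta_l tmul2_Delta_r !tmul_homog_l !tmul_homog_r.
split=> uD x y; last by rewrite tcommE uD subrr.
by apply/eqP; rewrite -subr_eq0 -tcommE uD.
Qed.

Lemma commutes_DeltaB u v : commutes_Delta u -> commutes_Delta v ->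
  commutes_Delta (fun x y => u x y - v x y).
Proof.
move=> uD vD x y; move: (uD x y) (vD x y); rewrite /lzmul /rzmul /= => uE vE.
by rewrite !mulrBr !mulrBl addrACA -opprD uE vE [RHS]addrACA -opprD.
Qed.

Lemma commutes_Delta_zser2 c : commutes_Delta (zser2 c).
Proof.
move=> x y; rewrite (eq_lzmul (fun v _ => zser2_swap c x v)).
by rewrite (eq_rzmul (fun v _ => zser2_swap c x v)) !lzmul_zser.
Qed.

Definition commutes_in_degree m f :=
  forall x, size x = (m + e)%N -> lzmul f x = rzmul f x.

Definition no_low_centralizer := forall m f, (0 < m < e)%N ->
  commutes_in_degree m f -> forall x, size x = m -> f x = 0.

Section Witness.
Variable w0 : word d.
Hypotheses (zw0_neq0 : z w0 != 0) (z_no_low : no_low_centralizer).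

Lemma size_w0 : size w0 = e.
Proof. by apply/eqP; apply: contraNT zw0_neq0 => /z_homog ->. Qed.

Definition wpow k := iter k (cat w0) [::].

Lemma size_wpow k : size (wpow k) = (e * k)%N.
Proof. by elim: k => [|k IHk] /=; rewrite ?muln0 // size_cat IHk size_w0 mulnS. Qed.

Lemma wpowSr k : wpow k.+1 = wpow k ++ w0.
Proof. by elim: k => [|k IHk] /=; rewrite ?cats0 // -catA -IHk. Qed.

Lemma lzmul_catw0l f s : lzmul f (w0 ++ s) = z w0 * f s.
Proof. by rewrite /lzmul -size_w0 take_size_cat // drop_size_cat. Qed.

Lemma rzmul_catw0r f s : rzmul f (s ++ w0) = f s * z w0.
Proof. by rewrite /rzmul size_cat size_w0 addnK take_size_cat // drop_size_cat. Qed.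

Lemma rzmul_catw0l f s : (e <= size s)%N ->
  rzmul f (w0 ++ s) = rzmul (fun v => f (w0 ++ v)) s.
Proof.
move=> le_es; rewrite /rzmul size_cat size_w0 addKn take_cat drop_cat.
by rewrite size_w0 ltnNge le_es.
Qed.

Lemma lzmul_catw0r f s : (e <= size s)%N ->
  lzmul f (s ++ w0) = lzmul (fun v => f (v ++ w0)) s.
Proof.
move=> le_es; rewrite /lzmul takel_cat // drop_cat.
case: ltnP => [//|le_se]; have -> : size s = e by apply/eqP; rewrite eqn_leq le_se.
by rewrite subnn drop0 drop_oversize ?size_w0.
Qed.

Lemma texp_wpow k : texp z k (wpow k) = z w0 ^+ k.
Proof. by elim: k => [|k IHk]; rewrite ?texpS /= ?lzmul_catw0l ?IHk ?exprS. Qed.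

Lemma lzmul_wpow f k : lzmul f (wpow k) = rzmul f (wpow k).
Proof.
case: k => [|k].
  by rewrite /lzmul /rzmul /= z_homog ?mul0r ?mulr0 // eq_sym -lt0n.
by rewrite {1}(_ : wpow k.+1 = w0 ++ wpow k) // lzmul_catw0l wpowSr rzmul_catw0r mulrC.
Qed.

Lemma zser2_wpow c k l : zser2 c (wpow k) (wpow l) = c k l * z w0 ^+ l * z w0 ^+ k.
Proof. by rewrite /zser2 /zser !size_wpow !mulKn // !texp_wpow. Qed.

Lemma commutes_in_degree_rzmul m f : (e <= m)%N -> commutes_in_degree m f ->
  forall x, size x = m -> f x = rzmul (fun v => f (w0 ++ v) / z w0) x.
Proof.
move=> le_em fC x x_m.
have fE : lzmul f (w0 ++ x) = rzmul f (w0 ++ x).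
  by apply: fC; rewrite size_cat size_w0 x_m addnC.
rewrite lzmul_catw0l rzmul_catw0l ?x_m // in fE.
by rewrite rzmul_divr -fE mulrC mulKf.
Qed.

Lemma commutes_in_degree_lzmul m f : (e <= m)%N -> commutes_in_degree m f ->
  forall x, size x = m -> f x = lzmul (fun v => f (w0 ++ v) / z w0) x.
Proof.
move=> le_em fC x x_m.
have f_swap v : size v = (m - e)%N -> f (v ++ w0) = f (w0 ++ v).
  move=> v_m; have : lzmul f (w0 ++ v ++ w0) = rzmul f ((w0 ++ v) ++ w0).
    by rewrite -catA; apply: fC; rewrite !size_cat v_m size_w0; lia.
  by rewrite lzmul_catw0l rzmul_catw0r mulrC => /mulIf ->.
have fE : lzmul f (x ++ w0) = rzmul f (x ++ w0).
  by apply: fC; rewrite size_cat size_w0 x_m.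
rewrite rzmul_catw0r lzmul_catw0r ?x_m // in fE.
rewrite (eq_lzmul (g := fun v => f (w0 ++ v))) in fE; last first.
  by move=> v; rewrite x_m; apply: f_swap.
by rewrite lzmul_divr fE mulfK.
Qed.

Lemma centralizer_homog m f : commutes_in_degree m f ->
  exists a, forall x, size x = m -> f x = a * texp z (m %/ e) x.
Proof.
elim/ltn_ind: m f => m IHm f fC.
have [lt_me | le_em] := ltnP m e.
  have [m0 | m_gt0] := posnP m.
    exists (f [::]) => x; rewrite m0 div0n => /size0nil ->.
    by rewrite /texp /= /tone mulr1.
  by exists 0 => x x_m; rewrite mul0r (z_no_low _ fC) // m_gt0.
pose g v := f (w0 ++ v) / z w0.
have [a ga] : exists a,
    forall x, size x = (m - e)%N -> g x = a * texp z ((m - e) %/ e) x.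
  apply: IHm; first lia.
  move=> x; rewrite subnK // => x_m.
  rewrite -(commutes_in_degree_lzmul le_em fC x_m).
  by rewrite (commutes_in_degree_rzmul le_em fC x_m).
have -> : (m %/ e = ((m - e) %/ e).+1)%N.
  by rewrite -{1}(subnK le_em) divnDr ?dvdnn // divnn e_gt0 addn1.
exists a => x x_m; rewrite (commutes_in_degree_rzmul le_em fC x_m) texpSr.
rewrite (eq_rzmul (g := fun v => a * texp z ((m - e) %/ e) v)) => [|v]; last first.
  by rewrite x_m; apply: ga.
by rewrite /rzmul mulrA.
Qed.

Lemma centralizer_eq0 m f : commutes_in_degree m f -> f (wpow (m %/ e)) = 0 ->
  forall x, size x = m -> f x = 0.
Proof.
move=> /centralizer_homog [a fE] f0 x x_m; rewrite fE //.
have [dvd_em | ndvd_em] := boolP (e %| m)%N; last first.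
  rewrite texp_homog ?mulr0 // x_m; apply: contra ndvd_em => /eqP ->.
  exact: dvdn_mulr.
suff -> : a = 0 by rewrite mul0r.
move: f0; rewrite fE ?size_wpow ?divnK 1?mulnC ?divnK // texp_wpow => /eqP.
by rewrite mulf_eq0 expf_eq0 (negbTE zw0_neq0) andbF orbF => /eqP.
Qed.

Lemma commutes_Delta_eq0 u : commutes_Delta u ->
  (forall k l, u (wpow k) (wpow l) = 0) -> forall x y, u x y = 0.
Proof.
move=> uD u0; suff uq0 q x y : size y = q -> u x y = 0 by move=> x y; apply: uq0 erefl.
elim/ltn_ind: q x y => q IHq.
(* The commutator terms acting on y only see shorter second arguments. *)
have u_y p y : size y = q -> commutes_in_degree p (u^~ y).
  move=> y_q x _; have := uD x y.
  by rewrite [lzmul (u x) y]lzmul_eq0 ?[rzmul (u x) y]rzmul_eq0 ?addr0 // => v;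
    rewrite y_q => /IHq; apply.
(* Left and right multiplication by z agree at the words w0^k. *)
have u_wpow k : commutes_in_degree q (u (wpow k)).
  by move=> y _; have := uD (wpow k) y; rewrite lzmul_wpow => /addrI.
have u_wpow0 k y : size y = q -> u (wpow k) y = 0.
  by move=> y_q; apply: centralizer_eq0 (u_wpow k) _ y y_q; apply: u0.
move=> x y y_q.
exact: centralizer_eq0 (u_y _ y y_q) (u_wpow0 _ y y_q) x erefl.
Qed.

Theorem commutes_Delta_powserP u : commutes_Delta u <-> in_powser_tensor z u.
Proof.
rewrite in_powser_tensorP; split=> [uD | [c uc] x y]; last first.
  by move: (commutes_Delta_zser2 c x y); rewrite /lzmul /rzmul /= !uc.
pose c k l := u (wpow k) (wpow l) / (z w0 ^+ l * z w0 ^+ k).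
exists c => x y; apply/eqP; rewrite -subr_eq0; apply/eqP.
apply: (commutes_Delta_eq0 (commutes_DeltaB uD (commutes_Delta_zser2 c))) => k l.
by rewrite zser2_wpow -mulrA divfK ?subrr // mulf_neq0 // expf_neq0.
Qed.

Theorem Delta_centralizer_homog u :
  (forall x y, tcomm2 (Delta_prim z) u x y = 0) <-> in_powser_tensor z u.
Proof. exact: iff_trans (commutes_DeltaP u) (commutes_Delta_powserP u). Qed.

End Witness.

End HomogeneousElement.

Lemma wedge2_no_low_centralizer (K : fieldType) d (z : tser K d) (i j : 'I_d) :
  (2%:R : K) != 0 -> (forall a b : 'I_d, z [:: a; b] = - z [:: b; a]) ->
  z [:: i; j] != 0 -> no_low_centralizer z 2.
Proof.
move=> two_neq0 z_anti zij_neq0 m f /andP[m_gt0 m_lt2] fC x.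
have m1 : m = 1%N by lia.
subst m.
have fC3 a b c : z [:: a; b] * f [:: c] = f [:: a] * z [:: b; c].
  by have := fC [:: a; b; c]; rewrite /lzmul /rzmul /=; apply.
(* With c = i, antisymmetry turns this into 2 z_ij f_i = 0. *)
have fi0 : f [:: i] = 0.
  have : z [:: i; j] * f [:: i] *+ 2 = 0.
    by rewrite mulr2n {2}fC3 (z_anti j i) mulrN [f [:: i] * _]mulrC subrr.
  move/eqP; rewrite -mulr_natr !mulf_eq0 (negbTE two_neq0) (negbTE zij_neq0) orbF.
  by move/eqP.
case: x => [|c [|]] // _; have := fC3 i j c; rewrite fi0 mul0r => /eqP.
by rewrite mulf_eq0 (negbTE zij_neq0) => /eqP.
Qed.

Theorem lemma3p6 (K : fieldType) (d : nat) (z : tser K d) :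
  [pchar K] =i pred0 ->
  (in_V_nonzero z \/ in_wedge2_nonzero z) ->
  forall u : tser2 K d,
    (forall w1 w2, tcomm2 (Delta_prim z) u w1 w2 = 0) <-> in_powser_tensor z u.
Proof.
move=> char0 [[z_homog [w zw]] | [z_homog [z_anti [w zw]]]] u.
  have no_low1 : no_low_centralizer z 1 by case=> [|[|m]].
  exact (Delta_centralizer_homog (ltn0Sn 0) z_homog zw no_low1 u).
have two_neq0 : (2%:R : K) != 0 by rewrite (pcharf0P K).1.
have [i [j wij]] : exists i j, w = [:: i; j].
  case: w zw => [|i [|j [|k w]]] zw;
    first [by exists i, j | by rewrite z_homog ?eqxx in zw].
rewrite wij in zw.
exact (Delta_centralizer_homog (ltn0Sn 1) z_homog zw
  (wedge2_no_low_centralizer two_neq0 z_anti zw) u).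
Qed.
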